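(* Let $X,Y$ be non-empty subsets of $A^+$. (i) If $XY$ and $YX$ are prefix codes (resp. maximal prefix codes), then $X$ and $Y$ are prefix codes (resp. maximal prefix codes). (ii) If $XY$ and $YX$ are suffix codes (resp. maximal suffix codes), then $X$ and $Y$ are suffix codes (resp. maximal suffix codes). (iii) If $XY$ and $YX$ are bifix codes (resp. thin maximal bifix codes), then $X$ and $Y$ are bifix codes (resp. thin maximal bifix codes).
   Context: $A$ is a finite alphabet, $A^*$ the set of words, $A^+$ the non-empty words, $XY=\{xy:x\in X,y\in Y\}$. A prefix (suffix) code is a subset of $A^+$ in which no word is a proper prefix (suffix) of another; a bifix code is both. A prefix (suffix, bifix) code is maximal if it is not properly contained in another prefix (suffix, bifix) code over $A$. A set $X\subseteq A^*$ is thin if there is a word $w\in A^*$ that is not a factor (infix) of any word of $X$. *)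

From mathcomp Require Import all_boot.
Set Implicit Arguments. Unset Strict Implicit. Unset Printing Implicit Defensive.

Definition lang (A : finType) := seq A -> Prop.

Definition in_Aplus (A : finType) (X : lang A) : Prop :=
  forall w, X w -> w <> [::].

Definition nonempty_lang (A : finType) (X : lang A) : Prop := exists w, X w.

Definition lcat (A : finType) (X Y : lang A) : lang A :=
  fun w => exists x y, [/\ X x, Y y & w = x ++ y].

Definition lsubset (A : finType) (X Y : lang A) : Prop := forall w, X w -> Y w.

Definition proper_prefix (A : finType) (u v : seq A) : Prop :=
  exists t, t <> [::] /\ v = u ++ t.
Definition proper_suffix (A : finType) (u v : seq A) : Prop :=
  exists t, t <> [::] /\ v = t ++ u.

Definition prefix_code (A : finType) (X : lang A) : Prop :=
  in_Aplus X /\ forall u v, X u -> X v -> ~ proper_prefix u v.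
Definition suffix_code (A : finType) (X : lang A) : Prop :=
  in_Aplus X /\ forall u v, X u -> X v -> ~ proper_suffix u v.
Definition bifix_code (A : finType) (X : lang A) : Prop :=
  prefix_code X /\ suffix_code X.

Definition maximal_in (A : finType) (P : lang A -> Prop) (X : lang A) : Prop :=
  P X /\ forall Z, P Z -> lsubset X Z -> lsubset Z X.

Definition maximal_prefix_code (A : finType) (X : lang A) :=
  maximal_in (@prefix_code A) X.
Definition maximal_suffix_code (A : finType) (X : lang A) :=
  maximal_in (@suffix_code A) X.
Definition maximal_bifix_code (A : finType) (X : lang A) :=
  maximal_in (@bifix_code A) X.

Definition thin (A : finType) (X : lang A) : Prop :=
  exists w : seq A, forall x, X x -> ~ infix w x.

From mathcomp Require Import all_boot.
Set Implicit Arguments. Unset Strict Implicit. Unset Printing Implicit Defensive.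

(* Fixing a word y of Y, two words u, v of X with u a proper prefix of v give
   uy, vy in XY with uy a proper prefix of vy, so the code properties pass to
   the factors (prefix codes to the right factor of YX, suffix codes to the
   left factor of XY).  For maximality, a code Z enlarging X gives a code ZY
   enlarging XY; maximality of XY forces ZY = XY, and cancelling the fixed
   factor, possible since one side is a prefix (or suffix) code, gives Z = X.
   The same works on the right with a fixed word of X. *)


Section Words.
Variable A : finType.
Implicit Types (P : lang A -> Prop) (X Y Z : lang A) (u v a b : seq A).

Lemma Levi_cat u a v b : u ++ a = v ++ b ->
  exists t, (v = u ++ t /\ a = t ++ b) \/ (u = v ++ t /\ b = t ++ a).
Proof.
elim: u v => [|c u IH] [|d v] /= e.
- by exists [::]; left.
- by exists (d :: v); left.
- by exists (c :: u); right.
- case: e => <- /IH [t [[-> ->]|[-> ->]]]; exists t; by [left | right].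
Qed.

Lemma prefix_code_cancel X u v a b : prefix_code X -> X u -> X v ->
  u ++ a = v ++ b -> u = v /\ a = b.
Proof.
move=> [_ noX] Xu Xv /Levi_cat [[|c t] [[? ?]|[? ?]]]; subst; rewrite ?cats0 //.
- by exfalso; apply: (noX u _ Xu Xv); exists (c :: t).
- by exfalso; apply: (noX v _ Xv Xu); exists (c :: t).
Qed.

Lemma suffix_code_cancel X u v a b : suffix_code X -> X u -> X v ->
  a ++ u = b ++ v -> u = v /\ a = b.
Proof.
move=> [_ noX] Xu Xv /Levi_cat [[|c t] [[? ?]|[? ?]]]; subst; rewrite ?cats0 //.
- by exfalso; apply: (noX v _ Xv Xu); exists (c :: t).
- by exfalso; apply: (noX u _ Xu Xv); exists (c :: t).
Qed.

Lemma in_Aplus_lcat X Y : in_Aplus X -> in_Aplus (lcat X Y).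
Proof. by move=> aX w [x [y [Xx _ ->]]]; case: x Xx => // /aX. Qed.

Lemma lsubset_lcatl X Y Z : lsubset X Z -> lsubset (lcat X Y) (lcat Z Y).
Proof. by move=> XZ w [x [y [Xx Yy ->]]]; exists x, y; split=> //; apply: XZ. Qed.

Lemma lsubset_lcatr X Y Z : lsubset Y Z -> lsubset (lcat X Y) (lcat X Z).
Proof. by move=> YZ w [x [y [Xx Yy ->]]]; exists x, y; split=> //; apply: YZ. Qed.

Lemma prefix_code_lcat X Y :
  prefix_code X -> prefix_code Y -> prefix_code (lcat X Y).
Proof.
move=> pX [_ noY]; split; first exact: in_Aplus_lcat (proj1 pX).
move=> _ _ [x1 [y1 [Xx1 Yy1 ->]]] [x2 [y2 [Xx2 Yy2 ->]]] [t [t_nil e]].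
have [_ ey] := prefix_code_cancel pX Xx2 Xx1 (etrans e (esym (catA _ _ _))).
by apply: (noY y1 y2 Yy1 Yy2); exists t.
Qed.

Lemma suffix_code_lcat X Y :
  suffix_code X -> suffix_code Y -> suffix_code (lcat X Y).
Proof.
move=> [aX noX] sY; split; first exact: in_Aplus_lcat aX.
move=> _ _ [x1 [y1 [Xx1 Yy1 ->]]] [x2 [y2 [Xx2 Yy2 ->]]] [t [t_nil e]].
have [_ ex] := suffix_code_cancel sY Yy2 Yy1 (etrans e (catA _ _ _)).
by apply: (noX x1 x2 Xx1 Xx2); exists t.
Qed.

Lemma bifix_code_lcat X Y :
  bifix_code X -> bifix_code Y -> bifix_code (lcat X Y).
Proof.
by move=> [pX sX] [pY sY]; split; [apply: prefix_code_lcat | apply: suffix_code_lcat].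
Qed.

Lemma prefix_code_lcat_r X Y : nonempty_lang X -> in_Aplus Y ->
  prefix_code (lcat X Y) -> prefix_code Y.
Proof.
move=> [x Xx] aY [_ noXY]; split=> // u v Yu Yv [t [t_nil ev]].
apply: (noXY (x ++ u) (x ++ v)); [by exists x, u | by exists x, v |].
by exists t; rewrite ev catA.
Qed.

Lemma suffix_code_lcat_l X Y : nonempty_lang Y -> in_Aplus X ->
  suffix_code (lcat X Y) -> suffix_code X.
Proof.
move=> [y Yy] aX [_ noXY]; split=> // u v Xu Xv [t [t_nil ev]].
apply: (noXY (u ++ y) (v ++ y)); [by exists u, y | by exists v, y |].
by exists t; rewrite ev catA.
Qed.

Lemma thin_lcat_l X Y : nonempty_lang Y -> thin (lcat X Y) -> thin X.
Proof.
move=> [y Yy] [w noXY]; exists w => x Xx wx.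
by apply: (noXY (x ++ y)); [exists x, y | exact: infix_catr].
Qed.

Lemma thin_lcat_r X Y : nonempty_lang X -> thin (lcat X Y) -> thin Y.
Proof.
move=> [x Xx] [w noXY]; exists w => y Yy wy.
by apply: (noXY (x ++ y)); [exists x, y | exact: infix_catl].
Qed.

Lemma prefix_lcat_subset_l X Y Z : prefix_code Z -> nonempty_lang Y ->
  lsubset X Z -> lsubset (lcat Z Y) (lcat X Y) -> lsubset Z X.
Proof.
move=> pZ [y Yy] XZ ZYXY z Zz.
have [x [y' [Xx _ e]]] : lcat X Y (z ++ y) by apply: ZYXY; exists z, y.
by have [-> _] := prefix_code_cancel pZ Zz (XZ _ Xx) e.
Qed.

Lemma prefix_lcat_subset_r X Y Z : prefix_code X -> nonempty_lang X ->
  lsubset (lcat X Z) (lcat X Y) -> lsubset Z Y.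
Proof.
move=> pX [x Xx] XZXY z Zz.
have [x' [y [Xx' Yy e]]] : lcat X Y (x ++ z) by apply: XZXY; exists x, z.
by have [_ ->] := prefix_code_cancel pX Xx Xx' e.
Qed.

Lemma suffix_lcat_subset_l X Y Z : suffix_code Y -> nonempty_lang Y ->
  lsubset (lcat Z Y) (lcat X Y) -> lsubset Z X.
Proof.
move=> sY [y Yy] ZYXY z Zz.
have [x [y' [Xx Yy' e]]] : lcat X Y (z ++ y) by apply: ZYXY; exists z, y.
by have [_ ->] := suffix_code_cancel sY Yy Yy' e.
Qed.

Lemma suffix_lcat_subset_r X Y Z : suffix_code Z -> nonempty_lang X ->
  lsubset Y Z -> lsubset (lcat X Z) (lcat X Y) -> lsubset Z Y.
Proof.
move=> sZ [x Xx] YZ XZXY z Zz.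
have [x' [y [_ Yy e]]] : lcat X Y (x ++ z) by apply: XZXY; exists x, z.
by have [-> _] := suffix_code_cancel sZ Zz (YZ _ Yy) e.
Qed.

Lemma maximal_in_factor P (F : lang A -> lang A) X :
  (forall Z, P Z -> P (F Z)) -> (forall Z, lsubset X Z -> lsubset (F X) (F Z)) ->
  (forall Z, P Z -> lsubset X Z -> lsubset (F Z) (F X) -> lsubset Z X) ->
  P X -> maximal_in P (F X) -> maximal_in P X.
Proof.
move=> PF monoF reflF PX [_ maxFX]; split=> // Z PZ XZ.
exact: reflF (maxFX _ (PF _ PZ) (monoF _ XZ)).
Qed.

Lemma maximal_prefix_code_lcat_l X Y : prefix_code X -> prefix_code Y ->
  nonempty_lang Y -> maximal_prefix_code (lcat X Y) -> maximal_prefix_code X.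
Proof.
move=> pX pY neY maxXY.
apply: (maximal_in_factor (F := fun Z => lcat Z Y) _ _ _ _ maxXY) => // Z.
- by move/prefix_code_lcat; apply.
- exact: lsubset_lcatl.
- by move=> pZ; apply: prefix_lcat_subset_l.
Qed.

Lemma maximal_prefix_code_lcat_r X Y : prefix_code X -> prefix_code Y ->
  nonempty_lang X -> maximal_prefix_code (lcat X Y) -> maximal_prefix_code Y.
Proof.
move=> pX pY neX maxXY.
apply: (maximal_in_factor (F := lcat X) _ _ _ _ maxXY) => // Z.
- exact: prefix_code_lcat.
- exact: lsubset_lcatr.
- by move=> _ _; apply: prefix_lcat_subset_r.
Qed.

Lemma maximal_suffix_code_lcat_l X Y : suffix_code X -> suffix_code Y ->
  nonempty_lang Y -> maximal_suffix_code (lcat X Y) -> maximal_suffix_code X.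
Proof.
move=> sX sY neY maxXY.
apply: (maximal_in_factor (F := fun Z => lcat Z Y) _ _ _ _ maxXY) => // Z.
- by move/suffix_code_lcat; apply.
- exact: lsubset_lcatl.
- by move=> _ _; apply: suffix_lcat_subset_l.
Qed.

Lemma maximal_suffix_code_lcat_r X Y : suffix_code X -> suffix_code Y ->
  nonempty_lang X -> maximal_suffix_code (lcat X Y) -> maximal_suffix_code Y.
Proof.
move=> sX sY neX maxXY.
apply: (maximal_in_factor (F := lcat X) _ _ _ _ maxXY) => // Z.
- exact: suffix_code_lcat.
- exact: lsubset_lcatr.
- by move=> sZ; apply: suffix_lcat_subset_r.
Qed.

Lemma maximal_bifix_code_lcat_l X Y : bifix_code X -> bifix_code Y ->
  nonempty_lang Y -> maximal_bifix_code (lcat X Y) -> maximal_bifix_code X.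
Proof.
move=> bX bY neY maxXY.
apply: (maximal_in_factor (F := fun Z => lcat Z Y) _ _ _ _ maxXY) => // Z.
- by move/bifix_code_lcat; apply.
- exact: lsubset_lcatl.
- by move=> [pZ _]; apply: prefix_lcat_subset_l.
Qed.

Lemma maximal_bifix_code_lcat_r X Y : bifix_code X -> bifix_code Y ->
  nonempty_lang X -> maximal_bifix_code (lcat X Y) -> maximal_bifix_code Y.
Proof.
move=> [pX sX] bY neX maxXY.
apply: (maximal_in_factor (F := lcat X) _ _ _ _ maxXY) => // Z.
- exact: bifix_code_lcat.
- exact: lsubset_lcatr.
- by move=> _ _; apply: prefix_lcat_subset_r.
Qed.

End Words.

Theorem propositionP (A : finType) (X Y : lang A) :
  nonempty_lang X -> nonempty_lang Y -> in_Aplus X -> in_Aplus Y ->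
  (prefix_code (lcat X Y) -> prefix_code (lcat Y X) ->
         prefix_code X /\ prefix_code Y) /\
      (maximal_prefix_code (lcat X Y) -> maximal_prefix_code (lcat Y X) ->
         maximal_prefix_code X /\ maximal_prefix_code Y) /\
      (suffix_code (lcat X Y) -> suffix_code (lcat Y X) ->
         suffix_code X /\ suffix_code Y) /\
      (maximal_suffix_code (lcat X Y) -> maximal_suffix_code (lcat Y X) ->
         maximal_suffix_code X /\ maximal_suffix_code Y) /\
      (bifix_code (lcat X Y) -> bifix_code (lcat Y X) ->
         bifix_code X /\ bifix_code Y) /\
      (thin (lcat X Y) -> maximal_bifix_code (lcat X Y) ->
       thin (lcat Y X) -> maximal_bifix_code (lcat Y X) ->
         (thin X /\ maximal_bifix_code X) /\ (thin Y /\ maximal_bifix_code Y)).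
Proof.
move=> neX neY aX aY.
have prefixes : prefix_code (lcat X Y) -> prefix_code (lcat Y X) ->
    prefix_code X /\ prefix_code Y.
  move=> pXY pYX.
  by split; [exact: prefix_code_lcat_r neY aX pYX | exact: prefix_code_lcat_r neX aY pXY].
have suffixes : suffix_code (lcat X Y) -> suffix_code (lcat Y X) ->
    suffix_code X /\ suffix_code Y.
  move=> sXY sYX.
  by split; [exact: suffix_code_lcat_l neY aX sXY | exact: suffix_code_lcat_l neX aY sYX].
have bifixes : bifix_code (lcat X Y) -> bifix_code (lcat Y X) ->
    bifix_code X /\ bifix_code Y.
  move=> [pXY sXY] [pYX sYX].
  by have [[pX pY] [sX sY]] := (prefixes pXY pYX, suffixes sXY sYX).
split; [exact: prefixes | split; [|split; [exact: suffixes | split; [|split=> //]]]].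
- move=> mXY mYX; have [pX pY] := prefixes mXY.1 mYX.1.
  split; [exact: maximal_prefix_code_lcat_l pX pY neY mXY |
         exact: maximal_prefix_code_lcat_r pX pY neX mXY].
- move=> mXY mYX; have [sX sY] := suffixes mXY.1 mYX.1.
  split; [exact: maximal_suffix_code_lcat_l sX sY neY mXY |
         exact: maximal_suffix_code_lcat_r sX sY neX mXY].
- move=> thXY mXY _ mYX; have [bX bY] := bifixes mXY.1 mYX.1.
  split; split.
  + exact: thin_lcat_l neY thXY.
  + exact: maximal_bifix_code_lcat_l bX bY neY mXY.
  + exact: thin_lcat_r neX thXY.
  + exact: maximal_bifix_code_lcat_r bX bY neX mXY.
Qed.
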